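(* Let $n>k>0$ be integers and let $A$ be a $k$-splitting of $Q_2^n$. Then for every fixed direction, the number of $(n-k)$-faces in $A$ having this direction is even.
   Context: $Q_2^n=\{0,1\}^n$. For $0\le m\le n$, an $m$-face of $Q_2^n$ is given by a tuple $a=(a_1,\dots,a_n)\in\{0,1,*\}^n$ with exactly $m$ entries equal to $*$; it denotes the set $\{x\in Q_2^n : x_i=a_i \text{ whenever } a_i\in\{0,1\}\}$. The direction of a face is the set of positions of its asterisks. A $k$-splitting of $Q_2^n$ is a collection of exactly $2^k$ $(n-k)$-faces whose union is $Q_2^n$ (equivalently, a partition of $Q_2^n$ into $(n-k)$-faces). *)

From mathcomp Require Import all_boot.
Set Implicit Arguments. Unset Strict Implicit. Unset Printing Implicit Defensive.

Definition vertex (n : nat) := {ffun 'I_n -> bool}.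

(* A face a in {0,1,*}^n: None encodes '*', Some b encodes the bit b. *)
Definition face (n : nat) := {ffun 'I_n -> option bool}.

Definition direction n (a : face n) : {set 'I_n} := [set i | a i == None].

Definition is_mface n (m : nat) (a : face n) : bool := #|direction a| == m.

Definition in_face n (x : vertex n) (a : face n) : bool :=
  [forall i, if a i is Some b then x i == b else true].

Definition k_splitting n (k : nat) (A : {set face n}) : Prop :=
  [/\ #|A| = 2 ^ k,
      forall a, a \in A -> is_mface (n - k) a
    & forall x : vertex n, exists2 a, a \in A & in_face x a].

From mathcomp Require Import all_boot zify.
Set Implicit Arguments. Unset Strict Implicit. Unset Printing Implicit Defensive.

(* A k-splitting is a partition of the cube: its 2^k faces of size 2^(n-k)
   cover the 2^n vertices.  Fix a direction D with |D| = n - k and let S be its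
   complement, nonempty since k > 0.  Flipping a coordinate of S exchanges the
   vertices of even and odd S-parity, so the two parity classes of the cube have
   the same size, and so do their traces on any face whose direction meets S;
   these are exactly the faces of A whose direction is not D.  A face of
   direction D has constant S-parity, so it lies in a single class.  Counting
   both classes face by face, the faces of direction D split evenly between the
   two parities, hence there is an even number of them. *)

Lemma sum_card_exchange (I T : finType) (P : pred I) (F : I -> {set T}) :
  \sum_(i | P i) #|F i| = \sum_x #|[set i | P i & x \in F i]|.
Proof.
under eq_bigr do rewrite -sum1_card big_mkcond /=.
rewrite exchange_big /=; apply: eq_bigr => x _.
by rewrite -sum1dep_card big_mkcondr.
Qed.

Lemma tight_cover_partition (I T : finType) (A : {set I}) (F : I -> {set T}) :
    (forall x, exists2 i, i \in A & x \in F i) ->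
    \sum_(i in A) #|F i| <= #|T| ->
  forall x, #|[set i in A | x \in F i]| = 1.
Proof.
move=> cover le_sum_T.
have cover_gt0 x : 0 < #|[set i in A | x \in F i]|.
  by have [i Ai Fix] := cover x; apply/card_gt0P; exists i; rewrite inE Ai.
have [le_sums eq_sums] :=
  leqif_sum (fun x (_ : predT x) => leqif_eq (cover_gt0 x)).
move: eq_sums; rewrite eqn_leq le_sums sum1_card -sum_card_exchange le_sum_T.
by move=> /esym/forallP all1 x; apply/esym/eqP/all1.
Qed.

Lemma card_partition_sum (I T : finType) (A : {set I}) (F : I -> {set T}) (R : pred T) :
    (forall x, #|[set i in A | x \in F i]| = 1) ->
  #|[set x | R x]| = \sum_(i in A) #|[set x in F i | R x]|.
Proof.
move=> part; rewrite sum_card_exchange -sum1dep_card big_mkcond /=.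
apply: eq_bigr => x _; rewrite -(part x).
by case Rx: (R x); [apply: eq_card | apply/esym/eq_card0] => i; rewrite !inE Rx ?andbT ?andbF.
Qed.

Lemma card_involution_swap (T : finType) (f : T -> T) (X : {set T}) (p : pred T) b :
    involutive f -> (forall x, (f x \in X) = (x \in X)) -> (forall x, p (f x) = ~~ p x) ->
  #|[set x in X | p x == b]| = #|[set x in X | p x == ~~ b]|.
Proof.
move=> fK fX pf; rewrite -(card_preimset _ (inv_inj fK)).
by apply: eq_card => x; rewrite !inE fX pf; case: (p x); case: b.
Qed.

Section Cube.
Variable n : nat.
Implicit Types (a : face n) (x : vertex n) (S : {set 'I_n}).

Definition face_vertices a : {set vertex n} := [set x | in_face x a].

Lemma card_face_vertices a : #|face_vertices a| = 2 ^ #|direction a|.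
Proof.
pose F i : {set bool} := if a i is Some b then [set b] else setT.
have -> : face_vertices a = setXn F.
  apply/setP => x; rewrite in_setXn inE; apply: eq_forallb => i.
  by rewrite /F; case: (a i) => [b|]; rewrite inE.
rewrite cardsXn (bigID (mem (direction a))) /= -(prod_nat_const (mem (direction a))).
rewrite [X in _ * X]big1 ?muln1 => [|i]; last first.
  by rewrite inE /F; case: (a i) => // b _; rewrite cards1.
by apply: eq_bigr => i; rewrite inE /F => /eqP ->; rewrite cardsT card_bool.
Qed.

Definition face_base a : vertex n := [ffun i => odflt false (a i)].

Lemma face_base_in a : face_base a \in face_vertices a.
Proof. by rewrite inE; apply/forallP => i; rewrite ffunE; case: (a i). Qed.

Definition flip (j : 'I_n) x : vertex n := [ffun i => if i == j then ~~ x i else x i].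

Lemma flipK j : involutive (flip j).
Proof. by move=> x; apply/ffunP => i; rewrite !ffunE; case: eqP => // _; rewrite negbK. Qed.

Lemma flip_face_vertices a j x :
  j \in direction a -> (flip j x \in face_vertices a) = (x \in face_vertices a).
Proof.
rewrite inE => /eqP aj; rewrite !inE; apply: eq_forallb => i; rewrite ffunE.
by case: eqP => [->|//]; rewrite aj.
Qed.

Definition parity S x : bool := \big[addb/false]_(i in S) x i.

Lemma parity_flip S j x : j \in S -> parity S (flip j x) = ~~ parity S x.
Proof.
move=> jS; rewrite /parity !(bigD1 j jS) /= ffunE eqxx addNb.
by congr (~~ (_ (+) _)); apply: eq_bigr => i /andP[_ /negbTE ij]; rewrite ffunE ij.
Qed.

Lemma parity_face_const a S x y : [disjoint S & direction a] ->
  x \in face_vertices a -> y \in face_vertices a -> parity S x = parity S y.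
Proof.
move=> /disjoint_setI0 Sa; rewrite !inE => /forallP xa /forallP ya.
apply: eq_bigr => i iS; move: (xa i) (ya i).
case ai: (a i) => [c|]; first by move=> /eqP -> /eqP ->.
by move/setP/(_ i): Sa; rewrite !inE iS ai.
Qed.

Lemma card_face_parity_fixed a S b : [disjoint S & direction a] ->
  #|[set x in face_vertices a | parity S x == b]|
    = (parity S (face_base a) == b) * 2 ^ #|direction a|.
Proof.
move=> Sa; case: eqP => [<- | ne].
  rewrite mul1n -card_face_vertices; apply: eq_card => x.
  by rewrite inE andb_idr // => xa; rewrite (parity_face_const Sa xa (face_base_in a)).
rewrite mul0n; apply: eq_card0 => x; rewrite inE; apply/andP => -[xa /eqP eb].
by apply: ne; rewrite -eb (parity_face_const Sa (face_base_in a) xa).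
Qed.

Lemma card_face_parity_balanced a S j b : j \in S -> j \in direction a ->
  #|[set x in face_vertices a | parity S x == b]|
    = #|[set x in face_vertices a | parity S x == ~~ b]|.
Proof.
move=> jS ja; apply: (card_involution_swap _ (flipK j)) => x.
  exact: flip_face_vertices.
exact: parity_flip.
Qed.

Lemma card_parity_balanced S j b : j \in S ->
  #|[set x | parity S x == b]| = #|[set x | parity S x == ~~ b]|.
Proof.
move=> jS; have := card_involution_swap b (flipK j) (X := setT) _ (fun x => parity_flip x jS).
by rewrite !setIdE !setTI; apply=> x; rewrite !inE.
Qed.

End Cube.

Section Splitting.
Variables (n k : nat) (A : {set face n}).
Hypotheses (k_le_n : k <= n) (splitA : k_splitting k A).

Lemma splitting_direction a : a \in A -> #|direction a| = n - k.
Proof. by case: splitA => _ mA _ /mA /eqP. Qed.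

Lemma splitting_partition x : #|[set a in A | x \in face_vertices a]| = 1.
Proof.
have [cardA _ cover] := splitA.
apply: tight_cover_partition x => [x | ].
  by have [a Aa xa] := cover x; exists a; rewrite ?inE.
rewrite card_ffun card_bool card_ord.
under eq_bigr => a Aa do rewrite card_face_vertices splitting_direction //.
by rewrite sum_nat_const cardA -expnD subnKC.
Qed.

Variables (D : {set 'I_n}) (j : 'I_n).
Hypotheses (cardD : #|D| = n - k) (jD : j \notin D).

Lemma splitting_parity_balanced :
  \sum_(a in A | direction a == D) (parity (~: D) (face_base a) == true)
    = \sum_(a in A | direction a == D) (parity (~: D) (face_base a) == false).
Proof.
pose count b := #|[set x | parity (~: D) x == b]|.
have count_faces b : count b =
    \sum_(a in A | direction a != D) #|[set x in face_vertices a | parity (~: D) x == b]|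
    + (\sum_(a in A | direction a == D) (parity (~: D) (face_base a) == b)) * 2 ^ #|D|.
  rewrite /count (card_partition_sum _ splitting_partition).
  rewrite (bigID (fun a => direction a == D)) addnC big_distrl /=; congr (_ + _).
  apply: eq_bigr => a /andP[_ /eqP <-].
  by apply: card_face_parity_fixed; rewrite disjoints_subset.
have off_D b :
    \sum_(a in A | direction a != D) #|[set x in face_vertices a | parity (~: D) x == b]|
    = \sum_(a in A | direction a != D)
        #|[set x in face_vertices a | parity (~: D) x == ~~ b]|.
  apply: eq_bigr => a /andP[Aa aD].
  have /subsetPn[i ia iD] : ~~ (direction a \subset D).
    by apply/negP => sub; move: aD; rewrite eqEcard sub cardD (splitting_direction Aa) leqnn.
  by apply: (card_face_parity_balanced (j := i)); rewrite // inE.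
have count_flip : count true = count false.
  by apply: (card_parity_balanced _ (j := j)); rewrite inE.
move: count_flip; rewrite !count_faces off_D => /addnI /eqP.
by rewrite eqn_pmul2r ?expn_gt0 // => /eqP.
Qed.

End Splitting.

Theorem proposition5 (n k : nat) (A : {set face n}) :
  0 < k -> k < n -> k_splitting k A ->
  forall D : {set 'I_n}, ~~ odd #|[set a in A | direction a == D]|.
Proof.
move=> k_gt0 lt_kn splitA D.
have [cardD | cardD] := eqVneq #|D| (n - k); last first.
  suff -> : [set a in A | direction a == D] = set0 by rewrite cards0.
  apply/setP => a; rewrite !inE; apply/andP => -[Aa /eqP aD].
  by move: cardD; rewrite -aD (splitting_direction splitA Aa) eqxx.
have /card_gt0P[j] : 0 < #|~: D|.
  by have := cardsC D; rewrite card_ord cardD; lia.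
rewrite inE => jD.
rewrite -sum1dep_card.
rewrite (eq_bigr (fun a => (parity (~: D) (face_base a) == true)
                           + (parity (~: D) (face_base a) == false))) => [|a _]; last first.
  by case: parity.
by rewrite big_split /= (splitting_parity_balanced (ltnW lt_kn) splitA cardD jD) addnn odd_double.
Qed.
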